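(* Let $d$ be a positive square-free integer with $d\equiv 3\pmod 4$. Let $a,b,c$ be integers with $a>0$, $\gcd(a,b,c)=1$, $D=b^2d-ac\neq 0$, and $d_0=\gcd(a,bd,c)$. In the quaternion algebra $\left(\frac{-d,D}{\mathbb{Q}}\right)$ let \[ M = \mathbb{Z}\left\lbrack 1, \frac{\alpha_1( 1+i)}{2} , \frac{\beta (i+1)}{2} + \frac{ bi+j}{d_0 \alpha_1 },\frac{-bd - bi -j+ij}{2d_0} \right\rbrack, \] where $\alpha_1,\alpha_2,\beta$ are integers with $\alpha_1\alpha_2=a/d_0$ such that for all integers $m,l$ one has $\frac{bd}{a}m+\frac{c}{a}l\in\mathbb{Z}$ if and only if $m=\alpha_1 m_0+\beta l_0$ and $l=\alpha_2 l_0$ for some $m_0,l_0\in\mathbb{Z}$. Assume $\alpha_1$ is odd and $2\mid D$. Then \[ \left(\frac{M}{2}\right) = (-1)^{(d^2-1)/8}\quad\text{and}\quad \left\lbrack\mathbb{Z}_2^\times : \mathrm{nrd}\left(M_2^\times\right)\right\rbrack=1. \]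
   Context: $\left(\frac{-d,D}{\mathbb{Q}}\right)$ is the quaternion algebra with basis $1,i,j,ij$, $i^2=-d$, $j^2=D$, $ij=-ji$; $\mathbb{Z}[v_1,\dots,v_4]$ is the $\mathbb{Z}$-span of the $v_k$, a $\mathbb{Z}$-order. $M_2=M\otimes\mathbb{Z}_2$, $\mathrm{nrd}$ is the reduced norm. $\left(\frac{M}{2}\right)$ is the Eichler symbol of $M$ at $2$ (for $\varepsilon\in\{-1,0,1\}$, it equals $\varepsilon$ iff the Kronecker symbols $\left(\frac{\Delta(\alpha)}{2}\right)$, $\alpha\in M_2$, with $\Delta(\alpha)=\mathrm{tr}(\alpha)^2-4\mathrm{nrd}(\alpha)$, take values in $\{0,\varepsilon\}$). *)

From mathcomp Require Import all_boot all_order all_algebra.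
Set Implicit Arguments. Unset Strict Implicit. Unset Printing Implicit Defensive.
Import GRing.Theory Num.Theory.
Local Open Scope ring_scope.

Definition sqfree (n : nat) : Prop := forall p : nat, prime p -> ~~ (p * p %| n)%N.

(* x0 + x1 i + x2 j + x3 ij *)
Record quat := Quat { q0 : rat; q1 : rat; q2 : rat; q3 : rat }.

Definition qadd (x y : quat) : quat :=
  Quat (q0 x + q0 y) (q1 x + q1 y) (q2 x + q2 y) (q3 x + q3 y).
Definition qscale (r : rat) (x : quat) : quat :=
  Quat (r * q0 x) (r * q1 x) (r * q2 x) (r * q3 x).
Definition qone : quat := Quat 1 0 0 0.

(* multiplication in (-dd, DD / Q): i^2 = -dd, j^2 = DD, ij = -ji *)
Definition qmul (dd DD : rat) (x y : quat) : quat :=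
  Quat (q0 x * q0 y - dd * q1 x * q1 y + DD * q2 x * q2 y + dd * DD * q3 x * q3 y)
       (q0 x * q1 y + q1 x * q0 y - DD * q2 x * q3 y + DD * q3 x * q2 y)
       (q0 x * q2 y + q2 x * q0 y - dd * q1 x * q3 y + dd * q3 x * q1 y)
       (q0 x * q3 y + q3 x * q0 y + q1 x * q2 y - q2 x * q1 y).

Definition qnrd (dd DD : rat) (x : quat) : rat :=
  q0 x ^+ 2 + dd * q1 x ^+ 2 - DD * q2 x ^+ 2 - dd * DD * q3 x ^+ 2.
Definition qtr (x : quat) : rat := 2 * q0 x.
Definition qdisc (dd DD : rat) (x : quat) : rat := qtr x ^+ 2 - 4 * qnrd dd DD x.

Definition Mgens (d b d0 al1 be : int) : quat * quat * quat * quat :=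
  let r (z : int) : rat := z%:~R in
  (Quat 1 0 0 0,
   Quat (r al1 / 2) (r al1 / 2) 0 0,
   Quat (r be / 2) (r be / 2 + r b / (r d0 * r al1)) (1 / (r d0 * r al1)) 0,
   Quat (- (r b * r d) / (2 * r d0)) (- r b / (2 * r d0)) (- 1 / (2 * r d0))
        (1 / (2 * r d0))).

Definition Mcomb (g : quat * quat * quat * quat) (x1 x2 x3 x4 : int) : quat :=
  let: (v1, v2, v3, v4) := g in
  qadd (qadd (qscale x1%:~R v1) (qscale x2%:~R v2))
       (qadd (qscale x3%:~R v3) (qscale x4%:~R v4)).

(* 2-adic integers: sequences u with u (n+1) = u n mod 2^n; the represented
   2-adic integer is lim u n, and it is congruent to u n mod 2^n. *)
Definition coh (u : nat -> int) : Prop :=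
  forall n : nat, (u n.+1 = u n %[mod (2 ^+ n)])%Z.

(* v_2(q) >= N for a rational q *)
Definition v2ge (q : rat) (N : nat) : bool := odd (absz (denq (q / 2 ^+ N))).

Definition conv2 (r s : nat -> rat) : Prop :=
  forall N : nat, exists n0 : nat, forall n : nat, (n0 <= n)%N -> v2ge (r n - s n) N.

Definition qconv2 (x y : nat -> quat) : Prop :=
  [/\ conv2 (fun n => q0 (x n)) (fun n => q0 (y n)),
      conv2 (fun n => q1 (x n)) (fun n => q1 (y n)),
      conv2 (fun n => q2 (x n)) (fun n => q2 (y n)) &
      conv2 (fun n => q3 (x n)) (fun n => q3 (y n))].

(* elements of M_2 = M (x) Z_2: Z_2-coefficient vectors w.r.t. the generators *)
Record Z2coef := Z2c { y1 : nat -> int; y2 : nat -> int; y3 : nat -> int; y4 : nat -> int }.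
Definition inM2 (y : Z2coef) : Prop := [/\ coh (y1 y), coh (y2 y), coh (y3 y) & coh (y4 y)].

Definition approx (g : quat * quat * quat * quat) (y : Z2coef) (n : nat) : quat :=
  Mcomb g (y1 y n) (y2 y n) (y3 y n) (y4 y n).

Definition unitM2 (dd DD : rat) g (y : Z2coef) : Prop :=
  inM2 y /\ exists z : Z2coef, [/\ inM2 z,
    qconv2 (fun n => qmul dd DD (approx g y n) (approx g z n)) (fun _ => qone) &
    qconv2 (fun n => qmul dd DD (approx g z n) (approx g y n)) (fun _ => qone)].

Definition nrd_is (dd DD : rat) g (y : Z2coef) (u : nat -> int) : Prop :=
  conv2 (fun n => qnrd dd DD (approx g y n)) (fun n => (u n)%:~R).

(* Kronecker symbol (x / 2) of a 2-adic integer x, read off from x mod 8 *)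
Definition kron2q (q : rat) : int :=
  if v2ge (q - 1) 3 || v2ge (q + 1) 3 then 1
  else if v2ge (q - 3) 3 || v2ge (q + 3) 3 then -1 else 0.

Definition kron_disc (dd DD : rat) g (y : Z2coef) (e : int) : Prop :=
  exists n0 : nat, forall n : nat, (n0 <= n)%N -> kron2q (qdisc dd DD (approx g y n)) = e.

(* Eichler symbol (M/2) = e : the Kronecker symbols (Delta(alpha)/2), alpha in M_2,
   take values in {0, e}; for e <> 0 the value e is actually attained
   (otherwise the symbol is 0), so that the symbol is well defined. *)
Definition eichler_is (dd DD : rat) g (e : int) : Prop :=
  (forall y : Z2coef, inM2 y -> forall e' : int, kron_disc dd DD g y e' -> e' = 0 \/ e' = e)
  /\ (e != 0 -> exists y : Z2coef, inM2 y /\ kron_disc dd DD g y e).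

(* [Z_2^x : nrd(M_2^x)] = 1, i.e. every 2-adic unit is the norm of a unit of M_2 *)
Definition nrd_units_index1 (dd DD : rat) g : Prop :=
  forall u : nat -> int, coh u -> odd (absz (u 1%N)) ->
    exists y : Z2coef, unitM2 dd DD g y /\ nrd_is dd DD g y u.

From mathcomp Require Import all_boot all_order all_algebra.
From mathcomp Require Import zify ring.
Set Implicit Arguments.
Unset Strict Implicit.
Unset Printing Implicit Defensive.
Import GRing.Theory Num.Theory.
Local Open Scope ring_scope.

(* Write d = 4k - 1.  For x = x1 + x2 v2 + x3 v3 + x4 v4 in M, clearing the denominator
   2 d0 al1 of the coordinates gives Delta(x) = (D (B^2 + d C^2) - d A^2) / (d0 al1)^2 with
   integers A, B, C such that B = C (mod 2).  Since 2 | D and 4 | B^2 + d C^2, this is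
   -d A^2 modulo 8, so (Delta(x)/2) is 0 for A even and (-d/2) = (-1)^((d^2-1)/8) for A odd,
   which happens for x = v2.
   The lattice Z_2[1, v2] is an order of Q_2(sqrt(-d)) with norm form
   x1^2 + al1 x1 x2 + k al1^2 x2^2.  As al1 is odd, Hensel's lemma for quadratics with odd
   linear coefficient shows that this form represents every 2-adic unit u, and an element of
   reduced norm u is a unit of M_2, its inverse being its conjugate divided by u. *)

Lemma coprimez_2X_odd n (o : int) : odd `|o| -> coprimez (2 ^+ n) o.
Proof.
by move=> oo; apply: coprimezXl; rewrite coprimezE /= -[(1 + 1)%N]/2%N coprime2n.
Qed.

Lemma dvdz_2X_mulr_odd n (x o : int) :
  odd `|o| -> (2 ^+ n %| x * o)%Z = (2 ^+ n %| x)%Z.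
Proof. by move=> oo; rewrite Gauss_dvdzl // coprimez_2X_odd. Qed.

Lemma dvdz_2X_leq m n (x : int) : (m <= n)%N -> (2 ^+ n %| x)%Z -> (2 ^+ m %| x)%Z.
Proof. by move=> mn; apply: dvdz_trans; apply: dvdz_exp2l. Qed.

Lemma odd_sqr_mod8 (x : int) : odd `|x| -> (8 %| x ^+ 2 - 1)%Z.
Proof.
move=> ox; have [r [s [xE rE]]] : exists r s : int, x = 2 * r + 1 /\ (r = 2 * s \/ r = 2 * s + 1).
  by exists (x %/ 2)%Z, (x %/ 4)%Z; lia.
apply/dvdzP; rewrite xE; case: rE => ->;
  [exists (2 * s ^+ 2 + s) | exists (2 * s ^+ 2 + 3 * s + 1)]; ring.
Qed.

Lemma numq_fracz (p q : int) : q != 0 ->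
  numq (p%:~R / q%:~R) * q = p * denq (p%:~R / q%:~R).
Proof.
move=> q0; apply: (@intr_inj rat); rewrite !intrM numqE.
by field; rewrite intr_eq0.
Qed.

Lemma denq_fracz_dvd (p q : int) : q != 0 -> (denq (p%:~R / q%:~R) %| q)%Z.
Proof.
move=> q0; have : (denq (p%:~R / q%:~R) %| numq (p%:~R / q%:~R) * q)%Z.
  by rewrite numq_fracz // dvdz_mull.
by rewrite Gauss_dvdzr // coprimez_sym coprimezE coprime_num_den.
Qed.

Lemma v2ge_fracz (p q : int) N : odd `|q| -> v2ge (p%:~R / q%:~R) N = (2 ^+ N %| p)%Z.
Proof.
move=> oq; have q0 : q != 0 by apply: contraTneq oq => ->.
have q2N0 : q * 2 ^+ N != 0 by rewrite mulf_neq0 ?expf_neq0.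
rewrite /v2ge.
have -> : p%:~R / q%:~R / 2 ^+ N = p%:~R / (q * 2 ^+ N)%:~R :> rat.
  by rewrite intrM rmorphXn invfM mulrA.
apply/idP/idP => [od | /dvdzP [p' ->]].
  rewrite -(dvdz_2X_mulr_odd _ _ od) -numq_fracz //.
  by apply: dvdz_mull; apply: dvdz_mull; apply: dvdzz.
have -> : (p' * 2 ^+ N)%:~R / (q * 2 ^+ N)%:~R = p'%:~R / q%:~R :> rat.
  by rewrite !intrM rmorphXn /=; field; rewrite expf_neq0 // intr_eq0 q0.
exact: dvdn_odd (denq_fracz_dvd p' q0) oq.
Qed.

Lemma v2ge_int (z : int) N : v2ge z%:~R N = (2 ^+ N %| z)%Z.
Proof. by rewrite -(v2ge_fracz z N (isT : odd `|1|)) divr1. Qed.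

Lemma eq_kron2q (x y : rat) :
  (forall c : int, v2ge (x + c%:~R) 3 = v2ge (y + c%:~R) 3) -> kron2q x = kron2q y.
Proof.
move=> xy; have subE (z : rat) (c : int) : z - c%:~R = z + (- c)%:~R by rewrite rmorphN.
by rewrite /kron2q -[1 : rat]/(1 : int)%:~R -[3 : rat]/(3 : int)%:~R !subE !xy.
Qed.

Lemma kron2q_int (z : int) : kron2q z%:~R =
  if (8 %| z - 1)%Z || (8 %| z + 1)%Z then 1
  else if (8 %| z - 3)%Z || (8 %| z + 3)%Z then -1 else 0.
Proof.
have addE (c : int) : z%:~R + c%:~R = (z + c)%:~R :> rat by rewrite rmorphD.
have subE (c : int) : z%:~R - c%:~R = (z - c)%:~R :> rat by rewrite rmorphB.
by rewrite /kron2q -[1 : rat]/(1 : int)%:~R -[3 : rat]/(3 : int)%:~R !addE !subE !v2ge_int.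
Qed.

Lemma kron2q_eq_mod8 (y z : int) : (8 %| y - z)%Z -> kron2q y%:~R = kron2q z%:~R.
Proof.
move=> yz; apply: eq_kron2q => c; rewrite -!rmorphD !v2ge_int.
by apply/idP/idP; lia.
Qed.

Lemma kron2q_div_oddsq (z m : int) : odd `|m| ->
  kron2q (z%:~R / (m ^+ 2)%:~R) = kron2q z%:~R.
Proof.
move=> om; have om2 : odd `|m ^+ 2| by rewrite abszX oddX om orbT.
have m0 : (m%:~R : rat) != 0 by rewrite intr_eq0; apply: contraTneq om => ->.
apply: eq_kron2q => c.
have -> : z%:~R / (m ^+ 2)%:~R + c%:~R = (z + c * m ^+ 2)%:~R / (m ^+ 2)%:~R :> rat.
  by rewrite rmorphD rmorphM rmorphXn /=; field.
rewrite v2ge_fracz // -rmorphD v2ge_int.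
have -> : z + c * m ^+ 2 = (z + c) + c * (m ^+ 2 - 1) by ring.
by rewrite rpredDr // dvdz_mull // odd_sqr_mod8.
Qed.

Lemma kron2q_mulr_sq (z A : int) :
  kron2q (z * A ^+ 2)%:~R = if odd `|A| then kron2q z%:~R else 0.
Proof.
case: ifP => oA.
  apply: kron2q_eq_mod8.
  by rewrite -{2}[z]mulr1 -mulrBr dvdz_mull // odd_sqr_mod8.
have [j ->] : exists j, A = 2 * j by exists (A %/ 2)%Z; lia.
have -> : z * (2 * j) ^+ 2 = 4 * (z * j ^+ 2) by ring.
by rewrite kron2q_int; move: (z * j ^+ 2) => y; case: ifP; [lia | case: ifP; lia].
Qed.

Lemma kron2q_opp_3mod4 (d : nat) : (d %% 4 = 3)%N ->
  kron2q (- d%:Z)%:~R = (-1) ^+ ((d * d - 1) %/ 8).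
Proof.
move=> d4; have [q [dE|dE]] : exists q, d = (8 * q + 3)%N \/ d = (8 * q + 7)%N.
  by exists (d %/ 8)%N; lia.
- have -> : ((d * d - 1) %/ 8 = 8 * (q * q) + 6 * q + 1)%N.
    by rewrite dE (_ : _ - 1 = 8 * (8 * (q * q) + 6 * q + 1))%N ?mulKn //; nia.
  rewrite -signr_odd (_ : odd _ = true) ?expr1; last by move: (q * q)%N => r; lia.
  by rewrite kron2q_int dE; case: ifP; [lia | case: ifP; lia].
- have -> : ((d * d - 1) %/ 8 = 8 * (q * q) + 14 * q + 6)%N.
    by rewrite dE (_ : _ - 1 = 8 * (8 * (q * q) + 14 * q + 6))%N ?mulKn //; nia.
  rewrite -signr_odd (_ : odd _ = false) ?expr0; last by move: (q * q)%N => r; lia.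
  by rewrite kron2q_int dE; case: ifP; lia.
Qed.

Lemma kron2q_disc_form (d : nat) (D A B C m : int) :
  (d %% 4 = 3)%N -> (2 %| D)%Z -> (2 %| B - C)%Z -> odd `|m| ->
  kron2q ((D * (B ^+ 2 + d%:Z * C ^+ 2) - d%:Z * A ^+ 2)%:~R / (m ^+ 2)%:~R) =
  if odd `|A| then kron2q (- d%:Z)%:~R else 0.
Proof.
move=> d4 D2 BC om; rewrite kron2q_div_oddsq // -kron2q_mulr_sq.
apply: kron2q_eq_mod8; rewrite mulNr opprK subrK.
have Q4 : (4 %| B ^+ 2 + d%:Z * C ^+ 2)%Z.
  have [k dE] : exists k : int, d%:Z = 4 * k - 1 by exists (d.+1 %/ 4)%N; lia.
  have [j ->] : exists j, B = C + 2 * j by exists ((B - C) %/ 2)%Z; lia.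
  by rewrite dE; apply/dvdzP; exists (j ^+ 2 + j * C + k * C ^+ 2); ring.
by rewrite (_ : 8 = 2 * 4) // dvdz_mul.
Qed.

Lemma cohE (u : nat -> int) : coh u <-> forall n, (2 ^+ n %| u n.+1 - u n)%Z.
Proof.
by split=> cu n; [rewrite -eqz_mod_dvd cu | apply/eqP; rewrite eqz_mod_dvd].
Qed.

Lemma coh_const (c : int) : coh (fun _ => c).
Proof. by []. Qed.

Lemma coh_add (x y : nat -> int) : coh x -> coh y -> coh (fun n => x n + y n).
Proof.
move=> /cohE cx /cohE cy; apply/cohE => n.
rewrite (_ : _ - _ = (x n.+1 - x n) + (y n.+1 - y n)); last by ring.
by rewrite rpredD.
Qed.

Lemma coh_opp (x : nat -> int) : coh x -> coh (fun n => - x n).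
Proof.
move=> /cohE cx; apply/cohE => n.
by rewrite -opprD rpredN.
Qed.

Lemma coh_mul (x y : nat -> int) : coh x -> coh y -> coh (fun n => x n * y n).
Proof.
move=> /cohE cx /cohE cy; apply/cohE => n.
rewrite (_ : _ - _ = x n.+1 * (y n.+1 - y n) + y n * (x n.+1 - x n)); last by ring.
by rewrite rpredD // dvdz_mull.
Qed.

Lemma coh_shift (u : nat -> int) : coh u -> coh (fun n => u n.+1).
Proof. by move=> /cohE cu; apply/cohE => n; apply: dvdz_2X_leq (cu n.+1). Qed.

Lemma odd_coh_shift (u : nat -> int) : coh u -> odd `|u 1%N| -> forall n, odd `|u n.+1|.
Proof.
move=> /cohE cu u1; elim=> // n IH.
by have := dvdz_2X_leq (isT : (1 <= n.+1)%N) (cu n.+1); rewrite expr1; lia.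
Qed.

Lemma quad_root_mod2X (A B C : int) n : odd `|B| -> (2 %| C)%Z ->
  exists2 t, (2 %| t)%Z & (2 ^+ n %| A * t ^+ 2 + B * t + C)%Z.
Proof.
move=> oB eC; suff [t et ft] : exists2 t, (2 %| t)%Z & (2 ^+ n.+1 %| A * t ^+ 2 + B * t + C)%Z.
  by exists t => //; apply: dvdz_2X_leq ft.
elim: n => [|n [t et /dvdzP [h fE]]].
  by exists 0; rewrite ?dvdz0 // expr1 expr0n !(mulr0, add0r).
(* Newton step: if [f t = h P] with [P = 2^(n+1)], then
   [f (t + h P) = P (h (f' t + 1) + A h^2 P)], and [f' t + 1] is even. *)
set P := 2 ^+ n.+1 in fE *; exists (t + h * P).
  by rewrite rpredD // dvdz_mull // /P exprS dvdz_mulr.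
have CE : C = h * P - A * t ^+ 2 - B * t by rewrite -fE; ring.
rewrite (_ : _ + C = (h * (2 * (A * t) + B + 1) + A * h ^+ 2 * P) * P).
  rewrite (exprS _ n.+1) -/P dvdz_mul2r ?expf_neq0 // rpredD // !dvdz_mull //.
    by clear -oB; lia.
  by rewrite /P exprS dvdz_mulr.
by rewrite CE; ring.
Qed.

Lemma quad_root_mod2X_uniq (A B C : int) n s t : odd `|B| -> (2 %| s)%Z -> (2 %| t)%Z ->
  (2 ^+ n %| A * s ^+ 2 + B * s + C)%Z -> (2 ^+ n %| A * t ^+ 2 + B * t + C)%Z ->
  (2 ^+ n %| s - t)%Z.
Proof.
move=> oB es et.
have odd_deriv : odd `|A * (s + t) + B|.
  have [s' [t' [-> ->]]] : exists s' t', s = 2 * s' /\ t = 2 * t'.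
    by exists (s %/ 2)%Z, (t %/ 2)%Z; lia.
  by rewrite -mulrDr mulrCA; move: (A * (s' + t')) => x; lia.
move=> fs ft; rewrite -(dvdz_2X_mulr_odd _ _ odd_deriv).
have -> : (s - t) * (A * (s + t) + B) =
    (A * s ^+ 2 + B * s + C) - (A * t ^+ 2 + B * t + C) by ring.
by rewrite rpredB.
Qed.

Lemma coh_quad_root (A B C : nat -> int) : coh A -> coh B -> coh C ->
  (forall n, odd `|B n|) -> (forall n, (2 %| C n)%Z) ->
  exists2 T, coh T & forall n, (2 ^+ n %| A n * T n ^+ 2 + B n * T n + C n)%Z.
Proof.
move=> /cohE cA /cohE cB /cohE cC oB eC.
pose f n t := A n * t ^+ 2 + B n * t + C n.
pose root n := [pred t | (2 %| t)%Z && (2 ^+ n %| f n t)%Z].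
have root_ex n : exists t, root n t.
  by have [t et ft] := quad_root_mod2X (A n) n (oB n) (eC n); exists t; apply/andP.
pose T n := xchoose (root_ex n).
have /all_and2 [eT fT] : forall n, (2 %| T n)%Z /\ (2 ^+ n %| f n (T n))%Z.
  by move=> n; apply/andP; exact: (xchooseP (root_ex n)).
exists T; last exact: fT.
apply/cohE => n.
apply: (quad_root_mod2X_uniq (oB n) (eT n.+1) (eT n) _ (fT n)).
have -> : A n * T n.+1 ^+ 2 + B n * T n.+1 + C n = f n.+1 (T n.+1) -
    ((A n.+1 - A n) * T n.+1 ^+ 2 + (B n.+1 - B n) * T n.+1 + (C n.+1 - C n)).
  by rewrite /f; ring.
apply: rpredB; first exact: dvdz_2X_leq (fT n.+1).
by apply: rpredD; [apply: rpredD; apply: dvdz_mulr | ].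
Qed.

Lemma coh_inv (w : nat -> int) : coh w -> (forall n, odd `|w n|) ->
  exists2 V, coh V & forall n, (2 ^+ n %| w n * V n - 1)%Z.
Proof.
(* [V = 1 + T] for a root [T] of the linear polynomial [w t + (w - 1)]. *)
move=> cw ow; have w_sub1_even n : (2 %| w n + -1)%Z by have := ow n; lia.
have [T cT fT] := coh_quad_root (coh_const 0) cw (coh_add cw (coh_const (-1))) ow w_sub1_even.
exists (fun n => 1 + T n); first exact: coh_add (coh_const 1) cT.
by move=> n; rewrite (_ : _ - 1 = 0 * T n ^+ 2 + w n * T n + (w n + -1)) //; ring.
Qed.

Lemma conv2_int (r s : nat -> rat) (f : nat -> int) :
  (forall n, r n - s n = (f n)%:~R) -> (forall n, (2 ^+ n %| f n)%Z) -> conv2 r s.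
Proof.
move=> rsE f2 N; exists N => n leNn.
by rewrite rsE v2ge_int (dvdz_2X_leq leNn).
Qed.

Lemma qconv2_qone (x : nat -> quat) (f : nat -> int) :
  (forall n, x n = Quat (f n)%:~R 0 0 0) -> (forall n, (2 ^+ n %| f n - 1)%Z) ->
  qconv2 x (fun _ => qone).
Proof.
move=> xE f1; split.
  by apply: (conv2_int (f := fun n => f n - 1)) => // n; rewrite xE rmorphB.
all: by apply: (conv2_int (f := fun _ => 0)) => // n; rewrite xE subr0.
Qed.

(* [A], [2 x3 - C] and [C] are [2 d0 al1] times the [i]-, [j]- and [ij]-coordinates. *)
Lemma qdisc_Mcomb (d : nat) (D b d0 al1 be x1 x2 x3 x4 : int) : d0 != 0 -> al1 != 0 ->
  let A := d0 * al1 * (x2 * al1 + x3 * be) + 2 * x3 * b - x4 * b * al1 in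
  let C := x4 * al1 in
  qdisc d%:R D%:~R (Mcomb (Mgens d%:Z b d0 al1 be) x1 x2 x3 x4) =
  (D * ((2 * x3 - C) ^+ 2 + d%:Z * C ^+ 2) - d%:Z * A ^+ 2)%:~R / ((d0 * al1) ^+ 2)%:~R.
Proof.
move=> d00 al10 A C; rewrite /Mcomb /Mgens /qdisc /qtr /qnrd /qadd /qscale /= /A /C.
rewrite -[(d%:Z)%:~R]/(d%:R : rat) !(rmorphD, rmorphN, rmorphM, rmorphB, rmorphXn) /=.
rewrite -[(d%:Z)%:~R]/(d%:R : rat).
by field; rewrite !intr_eq0 d00 al10.
Qed.

Lemma eichler_Mgens (d : nat) (D b d0 al1 be : int) :
  (d %% 4 = 3)%N -> (2 %| D)%Z -> odd `|d0 * al1| ->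
  eichler_is d%:R D%:~R (Mgens d%:Z b d0 al1 be) (kron2q (- d%:Z)%:~R).
Proof.
move=> d4 D2 om.
have [d00 al10] : d0 != 0 /\ al1 != 0.
  by split; apply: contraTneq om => ->; rewrite ?mulr0 ?mul0r.
have kron_disc_Mcomb x1 x2 x3 x4 :
    kron2q (qdisc d%:R D%:~R (Mcomb (Mgens d%:Z b d0 al1 be) x1 x2 x3 x4)) =
    if odd `|(d0 * al1 * (x2 * al1 + x3 * be) + 2 * x3 * b - x4 * b * al1)%R|
    then kron2q (- d%:Z)%:~R else 0.
  by rewrite qdisc_Mcomb // kron2q_disc_form //; lia.
split=> [y _ e [n0 /(_ n0 (leqnn _))] | _].
  by rewrite /approx kron_disc_Mcomb; case: ifP => _ <-; [right | left].
exists (Z2c (fun _ => 0) (fun _ => 1) (fun _ => 0) (fun _ => 0)).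
split; first by split; apply: coh_const.
exists 0%N => n _; rewrite /approx kron_disc_Mcomb /=.
rewrite !(mul1r, mul0r, mulr0, addr0, subr0) abszM oddM om.
by move: om; rewrite abszM oddM => /andP [_ ->].
Qed.

Definition normf (a k x1 x2 : int) : int := x1 ^+ 2 + a * x1 * x2 + k * a ^+ 2 * x2 ^+ 2.

(* Hensel: fix [x1 = 1] when [k] is even, [x2 = 1] when [k] is odd; in both cases the
   remaining quadratic in one variable has odd linear and even constant coefficient. *)
Lemma normf_coh_represents (a k : int) (w : nat -> int) :
  odd `|a| -> coh w -> (forall n, odd `|w n|) ->
  exists X1 X2, [/\ coh X1, coh X2 &
    forall n, (2 ^+ n %| normf a k (X1 n) (X2 n) - w n)%Z].
Proof.
move=> oa cw ow; have cC (c : int) : coh (fun n => c - w n) by apply: coh_add (coh_opp cw).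
case ok: (odd `|k|).
- have oka : odd `|k * a ^+ 2| by rewrite abszM abszX oddM oddX ok oa orbT.
  have eC n : (2 %| k * a ^+ 2 - w n)%Z by have := ow n; move: (k * _) oka => z; lia.
  have [T cT fT] := coh_quad_root (coh_const 1) (coh_const a) (cC _) (fun=> oa) eC.
  exists T, (fun _ => 1); split=> // n.
  by rewrite (_ : _ - _ = 1 * T n ^+ 2 + a * T n + (k * a ^+ 2 - w n)) //; rewrite /normf; ring.
- have eC n : (2 %| 1 - w n)%Z by have := ow n; lia.
  have [T cT fT] := coh_quad_root (coh_const (k * a ^+ 2)) (coh_const a) (cC _) (fun=> oa) eC.
  exists (fun _ => 1), T; split=> // n.
  by rewrite (_ : _ - _ = k * a ^+ 2 * T n ^+ 2 + a * T n + (1 - w n)) //; rewrite /normf; ring.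
Qed.

Section MgensUnits.

Variables (d : nat) (D b d0 al1 be : int).
Hypotheses (d_mod4 : (d %% 4 = 3)%N) (d0_neq0 : d0 != 0) (al1_odd : odd `|al1|).

Let g := Mgens d%:Z b d0 al1 be.
Let k : int := (d.+1 %/ 4)%N.

Let al1_neq0 : al1 != 0. Proof. by apply: contraTneq al1_odd => ->. Qed.

Let dE : (d%:Z)%:~R = 4 * k%:~R - 1 :> rat.
Proof.
have -> : d%:Z = 4 * k - 1 by rewrite /k; lia.
by rewrite rmorphB rmorphM.
Qed.

Lemma qnrd_Mcomb12 x1 x2 :
  qnrd d%:R D%:~R (Mcomb g x1 x2 0 0) = (normf al1 k x1 x2)%:~R.
Proof.
rewrite /Mcomb /g /Mgens /qnrd /qadd /qscale /= /normf -[d%:R]/((d%:Z)%:~R : rat) dE.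
rewrite !(rmorphD, rmorphN, rmorphM, rmorphB, rmorphXn) /=.
by field; rewrite !intr_eq0 d0_neq0 al1_neq0.
Qed.

Lemma qmul_Mcomb12_conj x1 x2 v :
  qmul d%:R D%:~R (Mcomb g x1 x2 0 0) (Mcomb g (v * (x1 + al1 * x2)) (- (v * x2)) 0 0)
  = Quat (normf al1 k x1 x2 * v)%:~R 0 0 0.
Proof.
rewrite /Mcomb /g /Mgens /qmul /qadd /qscale /= /normf -[d%:R]/((d%:Z)%:~R : rat) dE.
rewrite !(rmorphD, rmorphN, rmorphM, rmorphB, rmorphXn) /=.
by congr Quat; field; rewrite !intr_eq0 d0_neq0 al1_neq0.
Qed.

Lemma qmul_conj_Mcomb12 x1 x2 v :
  qmul d%:R D%:~R (Mcomb g (v * (x1 + al1 * x2)) (- (v * x2)) 0 0) (Mcomb g x1 x2 0 0)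
  = Quat (normf al1 k x1 x2 * v)%:~R 0 0 0.
Proof.
rewrite /Mcomb /g /Mgens /qmul /qadd /qscale /= /normf -[d%:R]/((d%:Z)%:~R : rat) dE.
rewrite !(rmorphD, rmorphN, rmorphM, rmorphB, rmorphXn) /=.
by congr Quat; field; rewrite !intr_eq0 d0_neq0 al1_neq0.
Qed.

(* The inverse of [x = x1 + x2 v2] is [conj x / nrd x], with [conj x = (x1 + al1 x2) - x2 v2]. *)
Lemma unitM2_of_normf (u X1 X2 V : nat -> int) : coh X1 -> coh X2 -> coh V ->
  (forall n, (2 ^+ n %| normf al1 k (X1 n) (X2 n) - u n)%Z) ->
  (forall n, (2 ^+ n %| normf al1 k (X1 n) (X2 n) * V n - 1)%Z) ->
  exists y, unitM2 d%:R D%:~R g y /\ nrd_is d%:R D%:~R g y u.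
Proof.
move=> c1 c2 cV nrdE invE.
exists (Z2c X1 X2 (fun _ => 0) (fun _ => 0)); split; last first.
  apply: (conv2_int (f := fun n => normf al1 k (X1 n) (X2 n) - u n)) => // n.
  by rewrite /approx qnrd_Mcomb12 rmorphB.
split; first by split.
exists (Z2c (fun n => V n * (X1 n + al1 * X2 n)) (fun n => - (V n * X2 n))
          (fun _ => 0) (fun _ => 0)); split.
- split=> //; first by apply: coh_mul cV (coh_add c1 (coh_mul (coh_const al1) c2)).
  exact: coh_opp (coh_mul cV c2).
- by apply: qconv2_qone invE => n; rewrite /approx qmul_Mcomb12_conj.
- by apply: qconv2_qone invE => n; rewrite /approx qmul_conj_Mcomb12.
Qed.

Lemma nrd_units_index1_Mgens : nrd_units_index1 d%:R D%:~R g.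
Proof.
(* [coh u] says nothing about [u 0], so we work with the odd approximations [u n.+1]. *)
move=> u cu ou; pose w n := u n.+1.
have [cw ow] := (coh_shift cu, odd_coh_shift cu ou).
have [X1 [X2 [c1 c2 normfE]]] := normf_coh_represents k al1_odd cw ow.
have [V cV invE] := coh_inv cw ow.
apply: (unitM2_of_normf c1 c2 cV) => n.
- rewrite (_ : _ - _ = (normf al1 k (X1 n) (X2 n) - w n) + (u n.+1 - u n)); last by ring.
  by apply: rpredD; [exact: normfE | exact: (cohE u).1].
- rewrite (_ : _ - _ = (normf al1 k (X1 n) (X2 n) - w n) * V n + (w n * V n - 1)); last by ring.
  by apply: rpredD; [apply: dvdz_mulr | exact: invE].
Qed.

End MgensUnits.

Lemma odd_gcdz_mulm (a b c : int) (d : nat) : odd d -> gcdz (gcdz a b) c = 1 ->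
  odd `|gcdz (gcdz a (b * d%:Z)) c|.
Proof.
move=> od abc1; set G := gcdz _ c; rewrite -[odd _]negbK -dvdn2; apply/negP => G2.
have dvd2 x : (G %| x)%Z -> (2 %| x)%Z := dvdz_trans (G2 : (2 %| G)%Z).
have a2 : (2 %| a)%Z by apply/dvd2/(dvdz_trans (dvdz_gcdl _ _)); apply: dvdz_gcdl.
have bd2 : (2 %| b * d%:Z)%Z by apply/dvd2/(dvdz_trans (dvdz_gcdl _ _)); apply: dvdz_gcdr.
have c2 : (2 %| c)%Z by apply/dvd2; apply: dvdz_gcdr.
have b2 : (2 %| b)%Z by rewrite -(Gauss_dvdzl _ (coprimez_2X_odd 1 (od : odd `|d%:Z|))).
have : (2 %| gcdz (gcdz a b) c)%Z by rewrite !dvdz_gcd a2 b2 c2.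
by rewrite abc1.
Qed.

Theorem lemma3p6 (d : nat) (a b c al1 al2 be : int) :
  (0 < d)%N -> sqfree d -> (d %% 4 = 3)%N ->
  0 < a -> gcdz (gcdz a b) c = 1 ->
  let D : int := b ^+ 2 * d%:Z - a * c in
  D != 0 ->
  let d0 : int := gcdz (gcdz a (b * d%:Z)) c in
  al1 * al2 = (a %/ d0)%Z ->
  (forall m l : int,
     ((b * d%:Z)%:~R / a%:~R * m%:~R + c%:~R / a%:~R * l%:~R : rat) \is a Num.int
     <-> exists m0 l0 : int, m = al1 * m0 + be * l0 /\ l = al2 * l0) ->
  odd (absz al1) -> (2 %| D)%Z ->
  let g := Mgens d%:Z b d0 al1 be in
  eichler_is d%:R D%:~R g ((-1) ^+ ((d * d - 1) %/ 8)) /\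
  nrd_units_index1 d%:R D%:~R g.
Proof.
move=> _ _ d_mod4 _ abc1 D _ d0 _ _ al1_odd D_even g.
have d0_odd : odd `|d0| by apply: odd_gcdz_mulm abc1; lia.
split; first by rewrite -kron2q_opp_3mod4 //; apply: eichler_Mgens; rewrite // abszM oddM d0_odd.
by apply: nrd_units_index1_Mgens => //; apply: contraTneq d0_odd => ->.
Qed.
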